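(* Consider the partial-block protocol described in the context, on a finite set of agents $A$ with a connected undirected connectivity graph $G=(A,E)$ and block length $L$. If at some epoch $t$ a deadlock occurs, i.e. $D(i)$ holds for every $i\in A$, then for every edge $(i,j)\in E$ we have $\{i,j\}\subseteq pb_i^{(t)}$ (and symmetrically $\{i,j\}\subseteq pb_j^{(t)}$).
   Context: Let $A$ be a finite set of agents (agent IDs) and $G=(A,E)$ a connected undirected graph; $\Gamma_i$ denotes the set of neighbors of $i$. Fix an integer $L\ge 1$ (block length). Each agent $i$ maintains a partial block $pb_i\subseteq A$ (a set of agent IDs). The system runs in epochs $t=0,1,2,\dots$; $pb_i^{(t)}$ is agent $i$'s partial block at the start of epoch $t$. In each epoch: (C1) every agent $i$ with $i\notin pb_i$ adds $i$ to $pb_i$; (C2) every agent $i$ sends its $pb_i$ to every neighbor $j\in\Gamma_i$. When an agent $i$ receives a partial block $P$ (from a neighbor or via a direct message) it applies the rule: (R1) if $|P\setminus\{i\}|>|pb_i\setminus\{i\}|$, agent $i$ sets $pb_i:=P$; (R2) otherwise, if $|P\setminus\{i\}|=|pb_i\setminus\{i\}|$ and $P\neq pb_i$, agent $i$ sends its current $pb_i$ directly to every agent in $P\setminus pb_i$, each of which processes it by the same rule; (R3) otherwise the received block is discarded. All received partial blocks are assumed to pass all validity and similarity checks. For an agent $i$ and epoch $t$, the predicate $D(i)$ means: $pb_i^{(t)}=pb_i^{(t+1)}$ and $|pb_i^{(t)}|<L$. A deadlock at epoch $t$ means that $D(i)$ holds for all $i\in A$. *)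

From mathcomp Require Import all_boot.
Set Implicit Arguments. Unset Strict Implicit. Unset Printing Implicit Defensive.

Section Protocol.
Variable A : finType.

Definition pbstate := A -> {set A}.

(* A message: (receiver, partial block carried). *)
Definition msg := (A * {set A})%type.

Definition upd (pb : pbstate) (i : A) (P : {set A}) : pbstate :=
  fun k => if k == i then P else pb k.

(* Agent i receives partial block P in state pb: rules R1/R2/R3.
   Returns the new state and the direct messages sent (R2). *)
Definition recv (i : A) (P : {set A}) (pb : pbstate) : pbstate * seq msg :=
  if #|pb i :\ i| < #|P :\ i| then (upd pb i P, [::])
  else if (#|P :\ i| == #|pb i :\ i|) && (P != pb i)
       then (pb, [seq (x, pb i) | x <- enum (P :\: pb i)])
       else (pb, [::]).

Inductive deliver_step : pbstate * seq msg -> pbstate * seq msg -> Prop :=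
| DStep (pb : pbstate) (s1 s2 : seq msg) (i : A) (P : {set A}) :
    deliver_step (pb, s1 ++ (i, P) :: s2)
                 ((recv i P pb).1, s1 ++ s2 ++ (recv i P pb).2).

Inductive star (R : pbstate * seq msg -> pbstate * seq msg -> Prop)
  : pbstate * seq msg -> pbstate * seq msg -> Prop :=
| star_refl x : star R x x
| star_step x y z : R x y -> star R y z -> star R x z.

Definition phaseC1 (pb : pbstate) : pbstate :=
  fun i => if i \in pb i then pb i else i |: pb i.

Definition phaseC2 (G : rel A) (pb : pbstate) : seq msg :=
  flatten [seq [seq (j, pb i) | j <- enum A & G i j] | i <- enum A].

(* One epoch from pb (state at start of epoch t) to pb' (state at start of
   epoch t+1): C1, then C2, then all messages (including direct R2
   messages) are received and processed in some arbitrary order, until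
   no message is pending. *)
Definition epoch (G : rel A) (pb pb' : pbstate) : Prop :=
  star deliver_step (phaseC1 pb, phaseC2 G (phaseC1 pb)) (pb', [::]).

Definition Dpred (L : nat) (pb pb' : pbstate) (i : A) : Prop :=
  pb i = pb' i /\ #|pb i| < L.

Definition deadlock (L : nat) (pb pb' : pbstate) : Prop :=
  forall i : A, Dpred L pb pb' i.

Definition undirected_connected (G : rel A) : Prop :=
  symmetric G /\ (forall i j : A, connect G i j).

End Protocol.

(* Every delivery either leaves the block of agent k unchanged or strictly
   increases #|pb_k :\ k|.  In a deadlock the epoch ends in the state it
   started from, so no delivery changes anything: no message ever triggers
   rule R1.  For an edge ab the C2 messages then give
   #|pb_a :\ b| <= #|pb_b :\ b| and #|pb_b :\ a| <= #|pb_a :\ a|, and since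
   a \in pb_a and b \in pb_b, counting forces b \in pb_a. *)
From mathcomp Require Import all_boot zify.
Set Implicit Arguments. Unset Strict Implicit. Unset Printing Implicit Defensive.

Section Exchange.
Variable A : finType.
Implicit Types (pb : pbstate A) (X Y : {set A}).

Definition pb_le (k : A) X Y := X = Y \/ #|X :\ k| < #|Y :\ k|.

Definition stale pb (m : msg A) := #|m.2 :\ m.1| <= #|pb m.1 :\ m.1|.

Lemma pb_le_trans k X Y Z : pb_le k X Y -> pb_le k Y Z -> pb_le k X Z.
Proof.
move=> [<-|lt_XY] [<-|lt_YZ]; [by left | by right | by right |].
by right; exact: ltn_trans lt_YZ.
Qed.

Lemma pb_le_anti k X Y : pb_le k X Y -> pb_le k Y X -> X = Y.
Proof.
case=> [//|lt_XY] [->//|lt_YX].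
by move: (ltn_trans lt_XY lt_YX); rewrite ltnn.
Qed.

Lemma recv_pb_le i P pb k : pb_le k (pb k) ((recv i P pb).1 k).
Proof.
rewrite /recv; case: ifP => [lt_i|_]; last by case: ifP; left.
by rewrite /= /upd; case: eqP => [->|_]; [right | left].
Qed.

Lemma recv_fixed_stale i P pb : (recv i P pb).1 i = pb i -> stale pb (i, P).
Proof.
rewrite /recv /stale /=; case: ifP => [lt_i|]; last by rewrite ltnNge => /negbFE.
by rewrite /= /upd eqxx => eP; rewrite eP ltnn in lt_i.
Qed.

Lemma star_deliver_pb_le x y :
  star (@deliver_step A) x y -> forall k, pb_le k (x.1 k) (y.1 k).
Proof.
elim=> [z k|a b c [pb s1 s2 i P] _ IH k]; first by left.
exact: pb_le_trans (recv_pb_le i P pb k) (IH k).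
Qed.

Lemma star_deliver_stale x y :
  star (@deliver_step A) x y -> y.2 = [::] -> y.1 =1 x.1 ->
  {in x.2, forall m, stale x.1 m}.
Proof.
elim=> [z -> //|a b c step_ab run_bc IH done_c ret_ca].
have ret_ba : b.1 =1 a.1.
  move=> k; apply: (@pb_le_anti k).
    by have := star_deliver_pb_le run_bc k; rewrite ret_ca.
  by have := star_deliver_pb_le (star_step step_ab (star_refl _ _)) k.
have ret_cb : c.1 =1 b.1 by move=> k; rewrite ret_ca ret_ba.
have stale_b : {in b.2, forall m, stale a.1 m}.
  by move=> m /(IH done_c ret_cb); rewrite /stale ret_ba.
case: step_ab ret_ba stale_b => pb s1 s2 i P /= ret_ba stale_b m.
rewrite mem_cat in_cons => /or3P[m_s1|/eqP->|m_s2].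
- by apply: stale_b; rewrite mem_cat m_s1.
- exact: recv_fixed_stale.
- by apply: stale_b; rewrite !mem_cat m_s2 orbT.
Qed.

Lemma mem_phaseC1 pb k : k \in phaseC1 pb k.
Proof. by rewrite /phaseC1; case: ifP => // _; rewrite setU11. Qed.

Lemma eq_phaseC2 (G : rel A) pb1 pb2 :
  pb1 =1 pb2 -> phaseC2 G pb1 = phaseC2 G pb2.
Proof.
by move=> e12; rewrite /phaseC2; congr flatten; apply: eq_map => i; rewrite e12.
Qed.

Lemma phaseC2_mem (G : rel A) pb a b : G a b -> (b, pb a) \in phaseC2 G pb.
Proof.
move=> Gab; apply/flatten_mapP; exists a; first by rewrite mem_enum.
by apply: map_f; rewrite mem_filter Gab mem_enum.
Qed.

Lemma epoch_fixed_phaseC1 (G : rel A) pb pb' :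
  epoch G pb pb' -> pb' =1 pb -> phaseC1 pb =1 pb.
Proof.
move=> run fixed k; have := star_deliver_pb_le run k.
rewrite /= fixed /phaseC1; case: ifP => // k_notin [e|].
  by move: (setU11 k (pb k)); rewrite e k_notin.
by rewrite setDUl setDv set0U ltnn.
Qed.

Lemma epoch_fixed_stale (G : rel A) pb pb' :
  epoch G pb pb' -> pb' =1 pb -> {in phaseC2 G pb, forall m, stale pb m}.
Proof.
move=> run fixed; have C1 := epoch_fixed_phaseC1 run fixed.
move=> m; rewrite -(eq_phaseC2 G C1) => /(star_deliver_stale run erefl).
by rewrite /stale /= C1; apply=> k /=; rewrite fixed C1.
Qed.

Lemma stale_exchange_mem (a b : A) X Y :
  a \in X -> b \in Y -> #|X :\ b| <= #|Y :\ b| -> #|Y :\ a| <= #|X :\ a| ->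
  b \in X.
Proof.
move=> aX bY le_b le_a; apply/negPn/negP => b_notin.
move: (cardsD1 a X) (cardsD1 b X) (cardsD1 b Y) (cardsD1 a Y).
by rewrite aX bY (negbTE b_notin); case: (a \in Y) => /=; lia.
Qed.

End Exchange.

Theorem lemma2 (A : finType) (G : rel A) (L : nat)
  (pb pb' : pbstate A) :
  undirected_connected G -> 1 <= L ->
  epoch G pb pb' ->
  deadlock L pb pb' ->
  forall i j : A, G i j ->
    [set i; j] \subset pb i /\ [set i; j] \subset pb j.
Proof.
(* Only pb^(t+1) = pb^(t) is used: neither connectivity nor L plays a role. *)
move=> [Gsym _] _ run dead.
have fixed : pb' =1 pb by move=> k; case: (dead k).
have self k : k \in pb k by rewrite -(epoch_fixed_phaseC1 run fixed) mem_phaseC1.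
have stale_C2 := epoch_fixed_stale run fixed.
have nbr a b : G a b -> b \in pb a.
  move=> Gab; apply: (stale_exchange_mem (self a) (self b)).
    exact: stale_C2 _ (phaseC2_mem pb Gab).
  by apply: stale_C2 _ (phaseC2_mem pb _); rewrite Gsym.
move=> i j Gij; split; apply/subsetP => x; rewrite !inE => /orP[]/eqP->;
  by rewrite ?self ?nbr // Gsym.
Qed.
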